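(* Let $n\ge0$ and $i,j\in D$. Suppose that for $m=1,\dots,r$ we are given $a_m,b_m\in D$ with $\mathcal F_n(a_m)\subseteq\mathcal F_n(b_m)$, $A_i(a_m)=1$ and $A_j(b_m)=1$, and that $A_i(c)\le A_j(c)$ for all $c\notin\{a_m:m=1,\dots,r\}$. Then $\mathcal F_{n+1}(i)\subseteq\mathcal F_{n+1}(j)$.
   Context: Fix integers $k\ge1$, $d\ge1$, $K=\{1,\dots,k\}$, $D=\{1,\dots,d\}$. The $k$-tree is the set $K^*$ of finite words over $K$ with root the empty word $\epsilon$; $xg$ ($g\in K$) are the children of $x$. $L_n$ is the set of words of length exactly $n$ and $\Delta_n$ the set of words of length at most $n$. $A$ is a $d\times d$ matrix with entries in $\{0,1\}$, and $A_i(m)=A(i,m)$. A (valid) labeling of $\Delta_n$ is a map $\lambda:\Delta_n\to D$ with $A(\lambda(x),\lambda(xg))=1$ for all $x\in\Delta_{n-1}$, $g\in K$. The $n$-follower set of $a\in D$ is $\mathcal F_n(a)=\{\lambda|_{L_n}: \lambda \text{ a valid labeling of } \Delta_n \text{ with } \lambda(\epsilon)=a\}$. *)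

From mathcomp Require Import all_boot all_algebra.
Set Implicit Arguments. Unset Strict Implicit. Unset Printing Implicit Defensive.

(* Alphabet K = 'I_k (children labels), symbol set D = 'I_d.
   Words of the k-tree: seq 'I_k; root = [::]; children of x are rcons x g. *)

Definition valid_labeling (k d : nat) (A : 'M[bool]_d) (n : nat)
  (lam : seq 'I_k -> 'I_d) : Prop :=
  forall (x : seq 'I_k) (g : 'I_k), size x < n -> A (lam x) (lam (rcons x g)).

Definition restrict_Ln (k d n : nat) (lam : seq 'I_k -> 'I_d)
  : {ffun n.-tuple 'I_k -> 'I_d} := [ffun w : n.-tuple 'I_k => lam (tval w)].

(* n-follower set F_n(a): the set of restrictions to L_n of valid labelings
   of Delta_n with root label a.  (Values of lam outside Delta_n are irrelevant.) *)
Definition follower (k d : nat) (A : 'M[bool]_d) (n : nat) (a : 'I_d)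
  : {ffun n.-tuple 'I_k -> 'I_d} -> Prop :=
  fun f => exists lam : seq 'I_k -> 'I_d,
    [/\ valid_labeling A n lam, lam [::] = a & restrict_Ln n lam = f].

Definition follower_sub (k d : nat) (A : 'M[bool]_d) (n : nat) (a b : 'I_d) : Prop :=
  forall f, @follower k d A n a f -> @follower k d A n b f.

From mathcomp Require Import all_boot all_algebra.

(* A labeling of Delta_(n+1) rooted at i splits into a labeling of Delta_n
   below each child g of the root, rooted at a label c with A i c.  If every
   such c can be traded for some c' with A j c' whose n-follower set contains
   that of c, relabeling each subtree accordingly and regrafting the pieces
   under a root labeled j keeps the labels on L_(n+1) unchanged. *)

Section Labelings.

Variables (k d : nat) (A : 'M[bool]_d).

Definition subtree (lam : seq 'I_k -> 'I_d) (g : 'I_k) : seq 'I_k -> 'I_d :=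
  fun x => lam (g :: x).

Definition graft (root : 'I_d) (mu : 'I_k -> seq 'I_k -> 'I_d) :
    seq 'I_k -> 'I_d :=
  fun x => if x is g :: x' then mu g x' else root.

Lemma restrict_LnP (n : nat) (l1 l2 : seq 'I_k -> 'I_d) :
  restrict_Ln n l1 = restrict_Ln n l2 <-> (forall x, size x = n -> l1 x = l2 x).
Proof.
split=> [E x /eqP sx | E].
  by have := congr1 (fun f : {ffun n.-tuple 'I_k -> 'I_d} => f (Tuple sx)) E;
    rewrite !ffunE.
by apply/ffunP=> w; rewrite !ffunE E ?size_tuple.
Qed.

Lemma valid_labeling_subtree (n : nat) (lam : seq 'I_k -> 'I_d) (g : 'I_k) :
  valid_labeling A n.+1 lam -> valid_labeling A n (subtree lam g).
Proof. by move=> Vlam x h sx; apply: (Vlam (g :: x)). Qed.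

Lemma valid_labeling_graft (n : nat) (root : 'I_d)
    (mu : 'I_k -> seq 'I_k -> 'I_d) :
  (forall g, valid_labeling A n (mu g)) -> (forall g, A root (mu g [::])) ->
  valid_labeling A n.+1 (graft root mu).
Proof. by move=> Vmu Amu [|g x] h //= sx; apply: Vmu. Qed.

Lemma follower_sub_succ (n : nat) (i j : 'I_d) :
  (forall c, A i c -> exists2 c', A j c' & follower_sub k A n c c') ->
  follower_sub k A n.+1 i j.
Proof.
move=> trade _ [lam [Vlam lam_root <-]].
have relabel g : exists mu : seq 'I_k -> 'I_d,
    [/\ valid_labeling A n mu, A j (mu [::]) &
        restrict_Ln n mu = restrict_Ln n (subtree lam g)].
  have /trade [c' Ajc' sub_c'] : A i (lam [:: g]) by rewrite -lam_root; apply: Vlam.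
  have [mu [Vmu mu_root Emu]] : follower A c' (restrict_Ln n (subtree lam g)).
    apply: sub_c'; exists (subtree lam g).
    by split=> //; apply: valid_labeling_subtree.
  by exists mu; rewrite mu_root.
have [mu mu_ok] := fin_all_exists relabel.
exists (graft j mu); split=> //.
  by apply: valid_labeling_graft => g; case: (mu_ok g).
apply/restrict_LnP => -[|g x] //= [sx].
by case: (mu_ok g) => _ _ /restrict_LnP ->.
Qed.

End Labelings.

Theorem proposition3p8 (k d : nat) (hk : 0 < k) (hd : 0 < d)
  (A : 'M[bool]_d) (n : nat) (i j : 'I_d) (r : nat) (a b : 'I_r -> 'I_d) :
  (forall m : 'I_r, follower_sub k A n (a m) (b m)) ->
  (forall m : 'I_r, A i (a m)) ->
  (forall m : 'I_r, A j (b m)) ->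
  (forall c : 'I_d, (forall m : 'I_r, c != a m) -> A i c <= A j c) ->
  follower_sub k A n.+1 i j.
Proof.
move=> sub_ab _ Ajb Aij; apply: follower_sub_succ => c Aic.
have [m /eqP -> | not_a] := pickP (fun m => c == a m).
  by exists (b m).
exists c => //.
by have := Aij c (fun m => negbT (not_a m)); rewrite Aic lt0b.
Qed.
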